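(* Let $\mathbf S=\langle S,+,0,\mathscr F\rangle$ be a semilattice with operators. For $\theta\in\operatorname{Con}\mathbf S$ with $0$-class $I$, let $\eta(\theta)$ be the semilattice congruence generated by $I$ (so $x\,\eta(\theta)\,y$ iff $x+i=y+i$ for some $i\in I$) and let $\tau(\theta)$ be the relation with $x\,\tau(\theta)\,y$ iff for all $h\in\mathscr F^\dagger$, $h(x)\in I\Leftrightarrow h(y)\in I$. Then the lattice $\operatorname{Con}\mathbf S$ is partitioned into the intervals $[\eta(\theta),\tau(\theta)]$, each such interval consisting of exactly the congruences having the same $0$-class (which is an $\mathscr F$-closed ideal) as $\theta$.
   Context: A semilattice with operators is a join semilattice $(S,+)$ with least element $0$ together with a set $\mathscr F$ of unary maps preserving $+$ and $0$; congruences are equivalence relations compatible with $+$ and all $f\in\mathscr F$. $\mathscr F^\dagger$ denotes the monoid generated by $\mathscr F$ under composition, including the identity map. *)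

From Stdlib Require Import Relations.
Set Implicit Arguments.
Unset Strict Implicit.

Section SWO.
Variable S : Type.
Variable add : S -> S -> S.
Variable zero : S.
Variable F : (S -> S) -> Prop.

Definition is_semilattice_with_operators : Prop :=
  (forall x y z, add x (add y z) = add (add x y) z) /\
  (forall x y, add x y = add y x) /\
  (forall x, add x x = x) /\
  (forall x, add zero x = x) /\
  (forall f, F f -> (forall x y, f (add x y) = add (f x) (f y)) /\ f zero = zero).

Definition sle (x y : S) : Prop := add x y = y.

Inductive Fdag : (S -> S) -> Prop :=
| Fdag_id : Fdag (fun x => x)
| Fdag_comp : forall f h, F f -> Fdag h -> Fdag (fun x => f (h x)).

Definition is_equivalence (r : S -> S -> Prop) : Prop :=
  (forall x, r x x) /\ (forall x y, r x y -> r y x) /\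
  (forall x y z, r x y -> r y z -> r x z).

Definition is_congruence (r : S -> S -> Prop) : Prop :=
  is_equivalence r /\
  (forall x y u v, r x y -> r u v -> r (add x u) (add y v)) /\
  (forall f, F f -> forall x y, r x y -> r (f x) (f y)).

Definition rel_le (r s : S -> S -> Prop) : Prop := forall x y, r x y -> s x y.

Definition zero_class (r : S -> S -> Prop) : S -> Prop := fun x => r x zero.

Definition same_set (A B : S -> Prop) : Prop := forall x, A x <-> B x.

Definition is_ideal (I : S -> Prop) : Prop :=
  (exists x, I x) /\
  (forall x y, sle x y -> I y -> I x) /\
  (forall x y, I x -> I y -> I (add x y)).

Definition F_closed (I : S -> Prop) : Prop :=
  forall f, F f -> forall x, I x -> I (f x).

Definition eta (theta : S -> S -> Prop) : S -> S -> Prop :=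
  fun x y => exists i, zero_class theta i /\ add x i = add y i.

Definition tau (theta : S -> S -> Prop) : S -> S -> Prop :=
  fun x y => forall h, Fdag h ->
    (zero_class theta (h x) <-> zero_class theta (h y)).

End SWO.

(** Both [eta theta] and [tau theta] depend on [theta] only through its
    0-class [I], which is an [F]-closed ideal.  Any
    congruence [psi] satisfies [eta psi <= psi <= tau psi]: from [x + i = y + i]
    with [i psi 0] one gets [x psi (x + i) = (y + i) psi y], and a congruence is
    preserved by every [h] in [F^dagger], so it cannot separate [h x] from the
    0-class while keeping [h y] in it.  Hence every [psi] with 0-class [I] lies
    in [[eta theta, tau theta]]; conversely [psi <= tau theta] puts the 0-class
    of [psi] inside [I] (take [h = id]), and [eta theta <= psi] gives the other
    inclusion since [x + x = 0 + x] for [x] in [I]. *)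
Set Implicit Arguments.
Unset Strict Implicit.

Section SemilatticeWithOperators.
Variable S : Type.
Variable add : S -> S -> S.
Variable zero : S.
Variable F : (S -> S) -> Prop.
Hypothesis HS : is_semilattice_with_operators add zero F.

Lemma addr0 x : add x zero = x.
Proof. destruct HS as (_ & addC & _ & add0r & _). now rewrite addC. Qed.

Lemma addACA a b c d : add (add a b) (add c d) = add (add a c) (add b d).
Proof.
  destruct HS as (addA & addC & _).
  now rewrite <- !addA, (addA b c d), (addC b c), <- addA.
Qed.

Lemma Fdag_add h : Fdag F h -> forall x y, h (add x y) = add (h x) (h y).
Proof.
  destruct HS as (_ & _ & _ & _ & HF).
  induction 1 as [|f h Hf _ IH]; intros x y; [reflexivity|].
  now rewrite IH; apply (HF f Hf).
Qed.

Lemma Fdag_compr h f : Fdag F h -> F f -> Fdag F (fun x => h (f x)).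
Proof.
  intros Hh Hf; induction Hh as [|g h Hg _ IH].
  - exact (Fdag_comp Hf (Fdag_id F)).
  - exact (Fdag_comp Hg IH).
Qed.

Section Congruence.
Variable r : S -> S -> Prop.
Hypothesis Hr : is_congruence add F r.

Lemma congruence_Fdag h : Fdag F h -> forall x y, r x y -> r (h x) (h y).
Proof. destruct Hr as (_ & _ & rF); induction 1; auto. Qed.

Lemma congruence_add_zero_class x s : zero_class zero r s -> r (add x s) x.
Proof.
  destruct Hr as ((rxx & _) & radd & _); intros Hs.
  pose proof (radd _ _ _ _ (rxx x) Hs) as H; rewrite addr0 in H; exact H.
Qed.

Lemma zero_class_add x y :
  zero_class zero r (add x y) <-> zero_class zero r x /\ zero_class zero r y.
Proof.
  pose proof Hr as ((_ & rsym & rtrans) & radd & _).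
  destruct HS as (addA & addC & addxx & add0r & _); unfold zero_class.
  split.
  - intros Hxy; split.
    + pose proof (congruence_add_zero_class x Hxy) as Hx.
      rewrite addA, addxx in Hx; exact (rtrans _ _ _ (rsym _ _ Hx) Hxy).
    + pose proof (congruence_add_zero_class y Hxy) as Hy.
      rewrite (addC x y), addA, addxx, (addC y x) in Hy.
      exact (rtrans _ _ _ (rsym _ _ Hy) Hxy).
  - intros [Hx Hy]; rewrite <- (add0r zero); exact (radd _ _ _ _ Hx Hy).
Qed.

Lemma zero_class_ideal : is_ideal add (zero_class zero r).
Proof.
  destruct Hr as ((rxx & _) & _); split; [exists zero; apply rxx|split].
  - intros x y Hxy Hy; unfold sle in Hxy.
    rewrite <- Hxy in Hy; exact (proj1 (proj1 (zero_class_add x y) Hy)).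
  - intros x y Hx Hy; exact (proj2 (zero_class_add x y) (conj Hx Hy)).
Qed.

Lemma zero_class_F_closed : F_closed F (zero_class zero r).
Proof.
  destruct Hr as (_ & _ & rF); destruct HS as (_ & _ & _ & _ & HF).
  intros f Hf x Hx; unfold zero_class in *.
  rewrite <- (proj2 (HF f Hf)); exact (rF f Hf _ _ Hx).
Qed.

Lemma eta_le : rel_le (eta add zero r) r.
Proof.
  destruct Hr as ((_ & rsym & rtrans) & _); intros x y (i & Hi & Exy).
  apply (rtrans _ (add x i)); [apply rsym; exact (congruence_add_zero_class x Hi)|].
  rewrite Exy; exact (congruence_add_zero_class y Hi).
Qed.

Lemma le_tau : rel_le r (tau zero F r).
Proof.
  pose proof Hr as ((_ & rsym & rtrans) & _); intros x y Hxy h Hh.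
  pose proof (congruence_Fdag Hh Hxy) as Hhxy; unfold zero_class.
  split; intros H; [exact (rtrans _ _ _ (rsym _ _ Hhxy) H)|exact (rtrans _ _ _ Hhxy H)].
Qed.

Lemma eta_congruence : is_congruence add F (eta add zero r).
Proof.
  pose proof Hr as ((rxx & _) & _).
  destruct HS as (addA & addC & _ & _ & HF).
  split; [split; [|split]|split].
  - intros x; exists zero; split; [apply rxx|reflexivity].
  - intros x y (i & Hi & Exy); exists i; auto.
  - intros x y z (i & Hi & Exy) (j & Hj & Eyz); exists (add i j).
    split; [exact (proj2 (zero_class_add i j) (conj Hi Hj))|].
    now rewrite !addA, Exy, <- !addA, (addC i j), !addA, Eyz.
  - intros x y u v (i & Hi & Exy) (j & Hj & Euv); exists (add i j).
    split; [exact (proj2 (zero_class_add i j) (conj Hi Hj))|].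
    now rewrite !(addACA _ _ i j), Exy, Euv.
  - intros f Hf x y (i & Hi & Exy); exists (f i).
    split; [exact (zero_class_F_closed Hf Hi)|].
    now rewrite <- !(proj1 (HF f Hf)), Exy.
Qed.

Lemma tau_congruence : is_congruence add F (tau zero F r).
Proof.
  split; [split; [|split]|split].
  - intros x h _; tauto.
  - intros x y Hxy h Hh; specialize (Hxy h Hh); tauto.
  - intros x y z Hxy Hyz h Hh; specialize (Hxy h Hh); specialize (Hyz h Hh); tauto.
  - intros x y u v Hxy Huv h Hh; rewrite !(Fdag_add Hh).
    pose proof (zero_class_add (h x) (h u)); pose proof (zero_class_add (h y) (h v)).
    specialize (Hxy h Hh); specialize (Huv h Hh); tauto.
  - intros f Hf x y Hxy h Hh; exact (Hxy _ (Fdag_compr Hh Hf)).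
Qed.

End Congruence.

Section SameZeroClass.
Variables theta psi : S -> S -> Prop.
Hypothesis Htheta : is_congruence add F theta.
Hypothesis Hpsi : is_congruence add F psi.

Lemma zero_class_of_interval :
  rel_le (eta add zero theta) psi -> rel_le psi (tau zero F theta) ->
  same_set (zero_class zero psi) (zero_class zero theta).
Proof.
  destruct HS as (_ & _ & addxx & add0r & _); pose proof Htheta as ((thetaxx & _) & _).
  intros Heta Htau x; split; intros Hx.
  - exact (proj2 (Htau x zero Hx _ (Fdag_id F)) (thetaxx zero)).
  - apply Heta; exists x; split; [exact Hx|now rewrite addxx, add0r].
Qed.

Hypothesis Hzc : same_set (zero_class zero psi) (zero_class zero theta).

Lemma eta_le_of_zero_class : rel_le (eta add zero theta) psi.
Proof.
  intros x y (i & Hi & Exy); apply (eta_le Hpsi).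
  exists i; split; [apply Hzc|]; assumption.
Qed.

Lemma le_tau_of_zero_class : rel_le psi (tau zero F theta).
Proof.
  intros x y Hxy h Hh; pose proof (le_tau Hpsi Hxy Hh).
  pose proof (Hzc (h x)); pose proof (Hzc (h y)); tauto.
Qed.

End SameZeroClass.

End SemilatticeWithOperators.

Theorem theorem5p2 (S : Type) (add : S -> S -> S) (zero : S)
  (F : (S -> S) -> Prop)
  (HS : is_semilattice_with_operators add zero F)
  (theta : S -> S -> Prop)
  (Htheta : is_congruence add F theta) :
  (is_ideal add (zero_class zero theta) /\ F_closed F (zero_class zero theta)) /\
  is_congruence add F (eta add zero theta) /\
  is_congruence add F (tau zero F theta) /\
  rel_le (eta add zero theta) theta /\ rel_le theta (tau zero F theta) /\
  (forall psi, is_congruence add F psi ->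
     (same_set (zero_class zero psi) (zero_class zero theta) <->
      (rel_le (eta add zero theta) psi /\ rel_le psi (tau zero F theta)))).
Proof.
  split; [split; [exact (zero_class_ideal HS Htheta)|exact (zero_class_F_closed HS Htheta)]|].
  split; [exact (eta_congruence HS Htheta)|].
  split; [exact (tau_congruence HS Htheta)|].
  split; [exact (eta_le HS Htheta)|].
  split; [exact (le_tau zero Htheta)|].
  intros psi Hpsi; split.
  - intros Hzc; split.
    + exact (eta_le_of_zero_class HS Hpsi Hzc).
    + exact (le_tau_of_zero_class Hpsi Hzc).
  - intros [Heta Htau]; exact (zero_class_of_interval HS Htheta Heta Htau).
Qed.
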